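(* Let $\delta\in(0,1)$ and assume every simplex of the triangulation $\mathcal T_h$ is non-obtuse (all dihedral angles $\le\pi/2$). Then for all $\mathbb B_h\in\mathcal W_h$ and all $K\in\mathcal T_h$, $$-\big(\nabla\mathbb B_h,\nabla\mathcal I_h\beta_\delta^{-1}(\mathbb B_h)\big)_{L^2(K)}\ \ge\ \frac1d\,\|\nabla\mathcal I_h\operatorname{tr}\ln\beta_\delta(\mathbb B_h)\|_{L^2(K)}^2=\frac1d\,\|\nabla\mathcal I_h\operatorname{tr}\ln\beta_\delta^{-1}(\mathbb B_h)\|_{L^2(K)}^2.$$
   Context: $\mathcal T_h$ is a conforming triangulation of a polyhedral domain $\Omega\subset\mathbb R^d$, $d\in\{2,3\}$, into simplices. $\mathcal W_h$ is the space of continuous functions $\overline\Omega\to\mathbb R^{d\times d}_{\mathrm S}$ (symmetric matrices) affine on each simplex; $\mathcal I_h$ is the nodal piecewise-linear interpolation at the mesh vertices (componentwise for matrices). For symmetric matrices, scalar functions act via the spectral decomposition; $\beta_\delta(s)=\max\{s,\delta\}$ and $\beta_\delta^{-1}(\mathbb B)$ denotes the matrix inverse of $\beta_\delta(\mathbb B)$. $(\nabla\mathbb A,\nabla\mathbb B)_{L^2(K)}=\int_K\sum_k\partial_{x_k}\mathbb A:\partial_{x_k}\mathbb B\,dx$. *)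

From HB Require Import structures.
From mathcomp Require Import all_boot all_order all_algebra.
From mathcomp Require Import all_classical all_reals all_analysis.
Set Implicit Arguments. Unset Strict Implicit. Unset Printing Implicit Defensive.
Import Order.TTheory GRing.Theory Num.Theory.
Local Open Scope ring_scope.

Section Simplex.
Variables (R : realType) (d : nat).
Variable x : 'I_d.+1 -> 'rV[R]_d.

Definition edge_mx : 'M[R]_d :=
  \matrix_(j < d, k < d) (x (lift ord0 j) 0 k - x ord0 0 k).

Definition simplex_nondegenerate : Prop := edge_mx \in unitmx.

Definition volK : R := `|\det edge_mx| / (d`!)%:R.

(* Barycentric coordinates: lambda_{j+1}(y) = ((y - x_0) E^{-1})_j,
   lambda_0 = 1 - sum_j lambda_{j+1}.  gradlam i k = d lambda_i / d y_k. *)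
Definition gradlam (i : 'I_d.+1) (k : 'I_d) : R :=
  match unlift ord0 i with
  | Some j => invmx edge_mx k j
  | None => - \sum_(j < d) invmx edge_mx k j
  end.

(* Partial derivative d/dy_k of the nodal P1 interpolant on K of scalar nodal
   values u_i (the interpolant is sum_i u_i lambda_i). *)
Definition dP1 (u : 'I_d.+1 -> R) (k : 'I_d) : R :=
  \sum_(i < d.+1) u i * gradlam i k.

Definition dP1mx (A : 'I_d.+1 -> 'M[R]_d) (k : 'I_d) : 'M[R]_d :=
  \sum_(i < d.+1) gradlam i k *: A i.

Definition frob (A B : 'M[R]_d) : R := \sum_(p < d) \sum_(q < d) A p q * B p q.

(* (grad A_h, grad B_h)_{L^2(K)} for the P1 interpolants of nodal values A, B;
   the integrand is constant on K, so the integral is |K| times it. *)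
Definition L2K_grad_inner (A B : 'I_d.+1 -> 'M[R]_d) : R :=
  volK * \sum_(k < d) frob (dP1mx A k) (dP1mx B k).

Definition L2K_grad_norm2 (u : 'I_d.+1 -> R) : R :=
  volK * \sum_(k < d) (dP1 u k) ^+ 2.

(* Inward unit normal of the facet opposite vertex i (grad lambda_i normalized)
   and the dihedral angle between the facets opposite i and j. *)
Definition vdot (u v : 'I_d -> R) : R := \sum_(k < d) u k * v k.
Definition inward_normal (i : 'I_d.+1) (k : 'I_d) : R :=
  gradlam i k / Num.sqrt (vdot (gradlam i) (gradlam i)).
Definition dihedral_angle (i j : 'I_d.+1) : R :=
  acos (- vdot (inward_normal i) (inward_normal j)).

Definition nonobtuse : Prop :=
  forall i j : 'I_d.+1, i != j -> dihedral_angle i j <= pi / 2.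

End Simplex.

(* Spectral calculus for symmetric matrices: if A = Q diag(l) Q^T with Q
   orthogonal, then f(A) := Q diag(f(l)) Q^T. *)
Definition orthogonal_mx (R : realType) (d : nat) (Q : 'M[R]_d) : Prop :=
  Q *m Q^T = 1%:M.

Definition spectral_decomp (R : realType) (d : nat)
    (A Q : 'M[R]_d) (l : 'rV[R]_d) : Prop :=
  orthogonal_mx Q /\ A = Q *m diag_mx l *m Q^T.

Definition mxfun (R : realType) (d : nat) (f : R -> R)
    (Q : 'M[R]_d) (l : 'rV[R]_d) : 'M[R]_d :=
  Q *m diag_mx (map_mx f l) *m Q^T.

Definition beta (R : realType) (delta s : R) : R := Num.max s delta.

From HB Require Import structures.
From mathcomp Require Import all_boot all_order all_algebra.
From mathcomp Require Import all_classical all_reals all_analysis.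
From mathcomp Require Import ring lra.
Import Order.TTheory GRing.Theory Num.Theory.
Local Open Scope ring_scope.

(* The P1 gradients on K are combinations of the barycentric gradients, so both
   sides are quadratic forms in the local stiffness matrix
   S_ij = grad lambda_i . grad lambda_j.  S is symmetric with zero row sums, hence
   each form equals -|K|/2 sum_ij S_ij (edge term)_ij, and non-obtuseness gives
   S_ij <= 0 for i <> j; it remains to compare the edge terms:
     (tr ln beta(B_i) - tr ln beta(B_j))^2 <= d (B_i - B_j) : (beta^-1(B_j) - beta^-1(B_i)).
   In the eigenbases of B_i and B_j the squared entries of Q_i^T Q_j form a doubly
   stochastic matrix, and Cauchy-Schwarz against these weights reduces this to the
   scalar inequality (ln beta a - ln beta b)^2 <= (a - b)(1/beta b - 1/beta a),
   a consequence of the logarithmic-mean bound (ln p - ln q)^2 <= (p - q)^2/(p q)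
   and of beta being monotone and 1-Lipschitz.  The equality holds because
   tr ln beta^-1 = - tr ln beta. *)

Lemma weighted_cauchy_schwarz {R : realFieldType} {I : finType} (w a b : I -> R) :
  (forall i, 0 <= w i) ->
  (\sum_i w i * a i * b i) ^+ 2 <= (\sum_i w i * a i ^+ 2) * \sum_i w i * b i ^+ 2.
Proof.
move=> w_ge0.
set A := \sum_i _ * a i ^+ 2; set B := \sum_i _ * b i ^+ 2; set S := \sum_i _.
have lagrange : \sum_i \sum_j w i * w j * (a i * b j - a j * b i) ^+ 2 =
    2 * (A * B - S ^+ 2).
  have -> : 2 * (A * B - S ^+ 2) = A * B + B * A - 2 * (S * S) by ring.
  rewrite !big_distrlr mulr_sumr -big_split -sumrB; apply: eq_bigr => i _ /=.
  rewrite mulr_sumr -big_split -sumrB; apply: eq_bigr => j _ /=; ring.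
rewrite -subr_ge0 -(pmulr_rge0 _ (ltr0Sn R 1)) -lagrange.
apply: sumr_ge0 => i _; apply: sumr_ge0 => j _.
by rewrite mulr_ge0 ?sqr_ge0 // mulr_ge0 ?w_ge0.
Qed.

Lemma weighted_sqr_sum_le {R : realFieldType} {I : finType} (w z : I -> R) :
  (forall i, 0 <= w i) -> (\sum_i w i * z i) ^+ 2 <= (\sum_i w i) * \sum_i w i * z i ^+ 2.
Proof.
move=> /(weighted_cauchy_schwarz w z (fun=> 1)).
by rewrite expr1n mulrC !(eq_bigr _ (fun i _ => mulr1 _)).
Qed.

Section ScalarInequalities.
Context {R : realType}.
Implicit Types x v p q : R.

Lemma expR_ge_partial_sum x n : 0 <= x ->
  \sum_(0 <= i < n) x ^+ i / i`!%:R <= expR x.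
Proof.
move=> x_ge0; apply: (nondecreasing_cvgn_le _ (is_cvg_series_exp_coeff x)).
by apply: nondecreasing_series => i _ _; rewrite divr_ge0 ?exprn_ge0.
Qed.

Lemma expR_ge_taylor2 x : 0 <= x -> 1 + x + x ^+ 2 / 2 <= expR x.
Proof.
move=> /(expR_ge_partial_sum _ 3); rewrite !big_nat_recr //= big_nil.
by rewrite expr0 expr1 !divr1 add0r.
Qed.

Lemma expR_sub_expRN_ge v : 0 <= v -> 2 * v <= expR v - expR (- v).
Proof.
move=> v_ge0; rewrite expRN.
have := expR_ge_taylor2 _ v_ge0; set A := 1 + v + _ => A_le.
have A_ge1 : 1 <= A by rewrite /A; have := sqr_ge0 v; lra.
have A_gt0 : 0 < A by lra.
have : A - A^-1 <= expR v - (expR v)^-1.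
  by apply: lerB => //; rewrite lef_pV2 ?posrE ?expR_gt0.
apply: le_trans.
rewrite -(ler_pM2r A_gt0) mulrBl mulVf ?gt_eqF // /A.
(* A^2 - 1 - 2 v A = (A - v)^2 - 1 - v^2 = v^4 / 4 *)
have := sqr_ge0 v; have : 0 <= v ^+ 2 * v ^+ 2 by rewrite mulr_ge0 ?sqr_ge0.
nra.
Qed.

Lemma sqr_ln_sub_le p q : 0 < p -> 0 < q ->
  (ln p - ln q) ^+ 2 <= (p - q) ^+ 2 / (p * q).
Proof.
wlog q_le_p : p q / q <= p.
  move=> wlog_le p_gt0 q_gt0; have [q_le_p|/ltW p_le_q] := leP q p.
    exact: wlog_le.
  have := wlog_le q p p_le_q q_gt0 p_gt0.
  by rewrite -sqrrN opprB -[(q - p) ^+ 2]sqrrN opprB [q * p]mulrC.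
move=> p_gt0 q_gt0; set v := (ln p - ln q) / 2.
have v_ge0 : 0 <= v by rewrite divr_ge0 // subr_ge0 ler_ln ?posrE.
have pE : p = q * expR v ^+ 2.
  rewrite -expRM_natr -[q in RHS]lnK ?posrE // -expRD.
  by rewrite (_ : _ + _ = ln p) ?lnK ?posrE // /v; field.
have -> : ln p - ln q = 2 * v by rewrite /v; field.
have -> : (p - q) ^+ 2 / (p * q) = (expR v - expR (- v)) ^+ 2.
  by rewrite {1 2}pE expRN; field; rewrite !gt_eqF ?expR_gt0.
have two_v_ge0 : 0 <= 2 * v by rewrite mulr_ge0.
have two_v_le := expR_sub_expRN_ge _ v_ge0.
by rewrite ler_sqr ?nnegrE // (le_trans two_v_ge0 two_v_le).
Qed.

Variable delta : R.

Lemma sqr_beta_sub_le a b :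
  (beta delta a - beta delta b) ^+ 2 <= (a - b) * (beta delta a - beta delta b).
Proof. by rewrite /beta !maxEle; case: (leP a delta); case: (leP b delta); nra. Qed.

Hypothesis delta_gt0 : 0 < delta.

Lemma beta_gt0 s : 0 < beta delta s.
Proof. by rewrite /beta lt_max delta_gt0 orbT. Qed.

Lemma sqr_ln_beta_sub_le a b :
  (ln (beta delta a) - ln (beta delta b)) ^+ 2 <=
  (a - b) * ((beta delta b)^-1 - (beta delta a)^-1).
Proof.
have := sqr_beta_sub_le a b; have := beta_gt0 a; have := beta_gt0 b.
move: (beta delta a) (beta delta b) => p q q_gt0 p_gt0 firm.
apply: le_trans (sqr_ln_sub_le _ _ p_gt0 q_gt0) _.
have -> : q^-1 - p^-1 = (p - q) / (p * q) by field; rewrite !gt_eqF.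
by rewrite mulrA ler_pM2r ?invr_gt0 ?mulr_gt0.
Qed.

End ScalarInequalities.

Lemma exchange_big2 (R : nmodType) (I1 I2 J1 J2 : finType)
    (F : I1 -> I2 -> J1 -> J2 -> R) :
  \sum_i1 \sum_i2 \sum_j1 \sum_j2 F i1 i2 j1 j2 =
  \sum_j1 \sum_j2 \sum_i1 \sum_i2 F i1 i2 j1 j2.
Proof.
rewrite (eq_bigr _ (fun i1 _ => exchange_big _ _ _ _ _ _)) exchange_big /=.
apply: eq_bigr => j1 _.
by rewrite (eq_bigr _ (fun i1 _ => exchange_big _ _ _ _ _ _)) exchange_big.
Qed.

Section Spectral.
Context {R : realType} {n : nat}.
Implicit Types (P Q A C E : 'M[R]_n) (a b f : 'rV[R]_n).

Lemma frobBl A C E : frob (A - C) E = frob A E - frob C E.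
Proof.
rewrite /frob -sumrB; apply: eq_bigr => p _; rewrite -sumrB.
by apply: eq_bigr => q _; rewrite !mxE mulrBl.
Qed.

Lemma frobBr A C E : frob E (A - C) = frob E A - frob E C.
Proof.
rewrite /frob -sumrB; apply: eq_bigr => p _; rewrite -sumrB.
by apply: eq_bigr => q _; rewrite !mxE mulrBr.
Qed.

Definition overlap P Q (k l : 'I_n) : R := ((P^T *m Q) k l) ^+ 2.

Lemma overlapC P Q k l : overlap Q P l k = overlap P Q k l.
Proof. by rewrite /overlap -[Q^T *m P]trmxK trmx_mul trmxK mxE. Qed.

Lemma overlap_id P k l : orthogonal_mx P -> overlap P P k l = (k == l)%:R.
Proof.
by move=> /mulmx1C PtP; rewrite /overlap PtP mxE; case: (k == l); rewrite ?expr1n ?expr0n.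
Qed.

Lemma overlap_row_sum P Q k : orthogonal_mx P -> orthogonal_mx Q ->
  \sum_l overlap P Q k l = 1.
Proof.
move=> /mulmx1C PtP QQt.
have : ((P^T *m Q) *m (P^T *m Q)^T) k k = 1.
  by rewrite trmx_mul trmxK mulmxA -(mulmxA _ Q) QQt mulmx1 PtP mxE eqxx.
by rewrite mxE => <-; apply: eq_bigr => l _; rewrite /overlap expr2 [X in _ = _ * X]mxE.
Qed.

Lemma overlap_col_sum P Q l : orthogonal_mx P -> orthogonal_mx Q ->
  \sum_k overlap P Q k l = 1.
Proof.
move=> PP QQ; rewrite -(overlap_row_sum Q P l QQ PP).
by apply: eq_bigr => k _; rewrite overlapC.
Qed.

Lemma frob_spectral P Q a f :
  frob (P *m diag_mx a *m P^T) (Q *m diag_mx f *m Q^T) =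
  \sum_k \sum_l overlap P Q k l * (a 0 k * f 0 l).
Proof.
have entry S g p q : (S *m diag_mx g *m S^T) p q = \sum_k S p k * g 0 k * S q k.
  by rewrite mul_mx_diag mxE; apply: eq_bigr => k _; rewrite !mxE.
rewrite /frob (eq_bigr (fun p => \sum_q \sum_k \sum_l
    (P p k * a 0 k * P q k) * (Q p l * f 0 l * Q q l))); last first.
  by move=> p _; apply: eq_bigr => q _; rewrite !entry big_distrlr.
rewrite exchange_big2; apply: eq_bigr => k _; apply: eq_bigr => l _.
rewrite /overlap mxE expr2 big_distrlr /= mulr_suml; apply: eq_bigr => p _.
by rewrite mulr_suml; apply: eq_bigr => q _; rewrite !mxE; ring.
Qed.

Lemma frob_spectral_id P a f : orthogonal_mx P ->
  frob (P *m diag_mx a *m P^T) (P *m diag_mx f *m P^T) = \sum_k a 0 k * f 0 k.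
Proof.
move=> PP; rewrite frob_spectral; apply: eq_bigr => k _.
rewrite (bigD1 k) //= big1 => [|l /negbTE lk]; last by rewrite overlap_id // eq_sym lk mul0r.
by rewrite overlap_id // eqxx mul1r addr0.
Qed.

Lemma tr_mxfun (g : R -> R) P a : orthogonal_mx P -> \tr (mxfun g P a) = \sum_k g (a 0 k).
Proof.
move=> /mulmx1C PtP; rewrite mxtrace_mulC mulmxA PtP mul1mx mxtrace_diag.
by apply: eq_bigr => k _; rewrite mxE.
Qed.

Section OverlapSums.
Context {P Q : 'M[R]_n}.
Hypotheses (PP : orthogonal_mx P) (QQ : orthogonal_mx Q).

Lemma overlap_sum : \sum_k \sum_l overlap P Q k l = n%:R.
Proof.
rewrite (eq_bigr (fun=> 1)) => [|k _]; last exact: overlap_row_sum.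
by rewrite sumr_const card_ord.
Qed.

Lemma sum_overlap_l (h : 'I_n -> R) : \sum_k h k = \sum_k \sum_l overlap P Q k l * h k.
Proof. by apply: eq_bigr => k _; rewrite -mulr_suml overlap_row_sum // mul1r. Qed.

Lemma sum_overlap_r (h : 'I_n -> R) : \sum_l h l = \sum_k \sum_l overlap P Q k l * h l.
Proof.
by rewrite exchange_big; apply: eq_bigr => l _; rewrite -mulr_suml overlap_col_sum // mul1r.
Qed.

Lemma tr_mxfun_subE (g : R -> R) a b :
  \tr (mxfun g P a) - \tr (mxfun g Q b) =
  \sum_k \sum_l overlap P Q k l * (g (a 0 k) - g (b 0 l)).
Proof.
rewrite !tr_mxfun // sum_overlap_l (sum_overlap_r (fun l => g (b 0 l))) -sumrB.
by apply: eq_bigr => k _; rewrite -sumrB; apply: eq_bigr => l _; rewrite mulrBr.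
Qed.

Lemma frob_mxfun_subE (g : R -> R) a b :
  frob (P *m diag_mx a *m P^T - Q *m diag_mx b *m Q^T) (mxfun g Q b - mxfun g P a) =
  \sum_k \sum_l overlap P Q k l * ((a 0 k - b 0 l) * (g (b 0 l) - g (a 0 k))).
Proof.
rewrite /mxfun frobBl !frobBr !frob_spectral_id // frob_spectral (frob_spectral Q P).
rewrite (sum_overlap_l (fun k => a 0 k * _)) (sum_overlap_r (fun l => b 0 l * _)).
rewrite [X in _ - (_ - X)]exchange_big -!sumrB; apply: eq_bigr => k _.
by rewrite -!sumrB; apply: eq_bigr => l _; rewrite overlapC !mxE; ring.
Qed.

Lemma sqr_tr_ln_beta_sub_le (delta : R) a b : 0 < delta ->
  (\tr (mxfun (fun s => ln (beta delta s)) P a) -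
   \tr (mxfun (fun s => ln (beta delta s)) Q b)) ^+ 2 <=
  n%:R * frob (P *m diag_mx a *m P^T - Q *m diag_mx b *m Q^T)
    (mxfun (fun s => (beta delta s)^-1) Q b - mxfun (fun s => (beta delta s)^-1) P a).
Proof.
move=> delta_gt0; rewrite tr_mxfun_subE frob_mxfun_subE -overlap_sum !pair_bigA /=.
have w_ge0 (kl : 'I_n * 'I_n) : 0 <= overlap P Q kl.1 kl.2 by exact: sqr_ge0.
apply: le_trans (weighted_sqr_sum_le _ _ w_ge0) _.
rewrite ler_wpM2l ?sumr_ge0 //; apply: ler_sum => -[k l] _ /=.
by rewrite ler_wpM2l ?(w_ge0 (k, l)) ?sqr_ln_beta_sub_le.
Qed.

End OverlapSums.

End Spectral.

Lemma laplacian_formE {R : comPzRingType} {I : finType} (c F : I -> I -> R) :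
  (forall i j, c i j = c j i) -> (forall i, \sum_j c i j = 0) ->
  2 * \sum_i \sum_j c i j * F i j =
  - \sum_i \sum_j c i j * (F i i + F j j - F i j - F j i).
Proof.
move=> cC c_row0.
have diag_l : \sum_i \sum_j c i j * F i i = 0.
  by rewrite big1 // => i _; rewrite -mulr_suml c_row0 mul0r.
have diag_r : \sum_i \sum_j c i j * F j j = 0.
  rewrite exchange_big big1 // => j _ /=.
  by rewrite -mulr_suml (eq_bigr (c j) (fun i _ => cC i j)) c_row0 mul0r.
have swap : \sum_i \sum_j c i j * F j i = \sum_i \sum_j c i j * F i j.
  by rewrite exchange_big; apply: eq_bigr => i _; apply: eq_bigr => j _; rewrite cC.
rewrite [in RHS](_ : \sum_i _ = \sum_i \sum_j c i j * F i i + \sum_i \sum_j c i j * F j j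
    - \sum_i \sum_j c i j * F i j - \sum_i \sum_j c i j * F j i); last first.
  rewrite -big_split -!sumrB; apply: eq_bigr => i _ /=.
  by rewrite -big_split -!sumrB; apply: eq_bigr => j _ /=; ring.
by rewrite diag_l diag_r swap; ring.
Qed.

Section Vdot.
Context {R : realType} {n : nat}.
Implicit Types u v : 'I_n -> R.

Lemma vdotC u v : vdot u v = vdot v u.
Proof. by apply: eq_bigr => k _; rewrite mulrC. Qed.

Lemma vdot_self_ge0 u : 0 <= vdot u u.
Proof. by apply: sumr_ge0 => k _; rewrite -expr2 sqr_ge0. Qed.

Lemma vdot_cauchy_schwarz u v : vdot u v ^+ 2 <= vdot u u * vdot v v.
Proof.
have := weighted_cauchy_schwarz (fun=> 1) u v (fun=> ler01).
rewrite /vdot (eq_bigr (fun k => u k * v k)) => [|k _]; last by rewrite mul1r.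
by rewrite !(eq_bigr _ (fun k _ => mul1r _)) => cs.
Qed.

Lemma vdot_le0_of_acos_le_pihalf u v :
  acos (- vdot (fun k => u k / Num.sqrt (vdot u u)) (fun k => v k / Num.sqrt (vdot v v)))
    <= pi / 2 -> vdot u v <= 0.
Proof.
set su := Num.sqrt (vdot u u); set sv := Num.sqrt (vdot v v).
have -> : vdot (fun k => u k / su) (fun k => v k / sv) = vdot u v / (su * sv).
  by rewrite /vdot mulr_suml; apply: eq_bigr => k _; rewrite invfM mulrACA.
have cs := vdot_cauchy_schwarz u v.
have uu_ge0 := vdot_self_ge0 u; have vv_ge0 := vdot_self_ge0 v.
have [/eqP|s_neq0] := eqVneq (su * sv) 0.
  by rewrite mulf_eq0 !sqrtr_eq0 => /orP[] ? _; nra.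
have s_gt0 : 0 < su * sv by rewrite lt_def s_neq0 mulr_ge0 ?sqrtr_ge0.
set y := vdot u v / _ => angle_le.
have y_sqr_le1 : y ^+ 2 <= 1.
  have uuvv : vdot u u * vdot v v = (su * sv) ^+ 2 by rewrite exprMn !sqr_sqrtr.
  by rewrite /y expr_div_n -uuvv ler_pdivrMr ?mul1r // uuvv exprn_gt0.
have y_bound : -1 <= - y <= 1 by apply/andP; split; nra.
have [/andP[angle_ge0 _] cos_angle] := acos_def y_bound.
have : 0 <= cos (acos (- y)).
  rewrite cos_ge0_pihalf // angle_le (le_trans _ angle_ge0) //.
  by rewrite oppr_le0 divr_ge0 ?pi_ge0.
by rewrite cos_angle oppr_ge0 pmulr_lle0 // invr_gt0.
Qed.

End Vdot.

Lemma frob_sumZ {R : realType} {n m : nat} (s t : 'I_m -> R) (A C : 'I_m -> 'M[R]_n) :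
  frob (\sum_i s i *: A i) (\sum_j t j *: C j) =
  \sum_i \sum_j s i * t j * frob (A i) (C j).
Proof.
rewrite /frob (eq_bigr (fun p => \sum_q \sum_i \sum_j (s i * A i p q) * (t j * C j p q))).
  rewrite exchange_big2; apply: eq_bigr => i _; apply: eq_bigr => j _.
  rewrite mulr_sumr; apply: eq_bigr => p _.
  by rewrite mulr_sumr; apply: eq_bigr => q _; ring.
move=> p _; apply: eq_bigr => q _; rewrite !summxE big_distrlr.
by apply: eq_bigr => i _; apply: eq_bigr => j _; rewrite !mxE.
Qed.

Section Stiffness.
Context {R : realType} {d : nat} (x : 'I_d.+1 -> 'rV[R]_d).

Definition stiff (i j : 'I_d.+1) : R := vdot (gradlam x i) (gradlam x j).

Lemma gradlam_sum k : \sum_i gradlam x i k = 0.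
Proof.
rewrite big_ord_recl /gradlam unlift_none addrC; apply/eqP; rewrite subr_eq0.
by apply/eqP/eq_bigr => j _; rewrite liftK.
Qed.

Lemma stiffC i j : stiff i j = stiff j i.
Proof. exact: vdotC. Qed.

Lemma stiff_row_sum i : \sum_j stiff i j = 0.
Proof.
rewrite /stiff /vdot exchange_big big1 // => k _.
by rewrite -mulr_sumr gradlam_sum mulr0.
Qed.

Lemma stiff_le0 i j : nonobtuse x -> i != j -> stiff i j <= 0.
Proof. by move=> obtuse /obtuse; apply: vdot_le0_of_acos_le_pihalf. Qed.

Lemma stiff_formE (F : 'I_d.+1 -> 'I_d.+1 -> R) :
  \sum_i \sum_j stiff i j * F i j =
  - 2^-1 * \sum_i \sum_j stiff i j * (F i i + F j j - F i j - F j i).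
Proof.
have two_neq0 : (2 : R) != 0 by rewrite pnatr_eq0.
apply: (mulfI two_neq0).
by rewrite (laplacian_formE _ _ stiffC stiff_row_sum); field.
Qed.

Lemma L2K_grad_innerE (A C : 'I_d.+1 -> 'M[R]_d) :
  L2K_grad_inner x A C =
  - (volK x / 2) * \sum_i \sum_j stiff i j * frob (A i - A j) (C i - C j).
Proof.
have sumE : \sum_k frob (dP1mx x A k) (dP1mx x C k) =
    \sum_i \sum_j stiff i j * frob (A i) (C j).
  rewrite /dP1mx; under eq_bigr => k _ do rewrite frob_sumZ.
  rewrite exchange_big; apply: eq_bigr => i _; rewrite exchange_big.
  by apply: eq_bigr => j _; rewrite /stiff /vdot mulr_suml.
rewrite /L2K_grad_inner sumE stiff_formE mulrA mulrN; congr (_ * _).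
apply: eq_bigr => i _; apply: eq_bigr => j _.
by rewrite frobBl !frobBr; congr (_ * _); ring.
Qed.

Lemma L2K_grad_norm2E (u : 'I_d.+1 -> R) :
  L2K_grad_norm2 x u = - (volK x / 2) * \sum_i \sum_j stiff i j * (u i - u j) ^+ 2.
Proof.
have sumE : \sum_k dP1 x u k ^+ 2 = \sum_i \sum_j stiff i j * (u i * u j).
  rewrite /dP1; under eq_bigr => k _ do rewrite expr2 big_distrlr.
  rewrite exchange_big; apply: eq_bigr => i _; rewrite exchange_big.
  by apply: eq_bigr => j _; rewrite /stiff /vdot mulr_suml; apply: eq_bigr => k _ /=; ring.
rewrite /L2K_grad_norm2 sumE stiff_formE mulrA mulrN; congr (_ * _).
by apply: eq_bigr => i _; apply: eq_bigr => j _; congr (_ * _); ring.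
Qed.

End Stiffness.

Theorem lemma2p4 (R : realType) (d : nat) (delta : R)
  (x : 'I_d.+1 -> 'rV[R]_d)
  (B : 'I_d.+1 -> 'M[R]_d) (Q : 'I_d.+1 -> 'M[R]_d) (l : 'I_d.+1 -> 'rV[R]_d) :
  (d = 2%N \/ d = 3%N) ->
  0 < delta < 1 ->
  simplex_nondegenerate x ->
  nonobtuse x ->
  (forall i, spectral_decomp (B i) (Q i) (l i)) ->
  let Binv := fun i => mxfun (fun s => (beta delta s)^-1) (Q i) (l i) in
  let trlnB := fun i => \tr (mxfun (fun s => ln (beta delta s)) (Q i) (l i)) in
  let trlnBinv := fun i => \tr (mxfun (fun s => ln ((beta delta s)^-1)) (Q i) (l i)) in
  - L2K_grad_inner x B Binv >= (d%:R)^-1 * L2K_grad_norm2 x trlnB /\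
  (d%:R)^-1 * L2K_grad_norm2 x trlnB = (d%:R)^-1 * L2K_grad_norm2 x trlnBinv.
Proof.
move=> d_23 /andP[delta_gt0 _] _ obtuse spectral Binv trlnB trlnBinv.
have d_gt0 : 0 < d%:R :> R by rewrite ltr0n; case: d_23 => ->.
have Q_orth i : orthogonal_mx (Q i) by case: (spectral i).
have B_E i : B i = Q i *m diag_mx (l i) *m (Q i)^T by case: (spectral i).
have volK_ge0 : 0 <= volK x / 2 by rewrite !divr_ge0 ?ler0n.
split.
  rewrite L2K_grad_innerE L2K_grad_norm2E !mulNr opprK mulrN mulrCA -mulrN.
  rewrite ler_wpM2l // mulr_sumr -sumrN; apply: ler_sum => i _.
  rewrite mulr_sumr -sumrN; apply: ler_sum => j _.
  have [<-|i_neq_j] := eqVneq i j; first by rewrite frobBl !subrr expr0n /= !mulr0 oppr0.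
  have := sqr_tr_ln_beta_sub_le (Q_orth i) (Q_orth j) delta (l i) (l j) delta_gt0.
  rewrite -!B_E -/(trlnB i) -/(trlnB j) -/(Binv i) -/(Binv j) !frobBr.
  set T := (_ - _) ^+ 2; set F1 := frob _ (Binv i); set F2 := frob _ (Binv j) => T_le.
  have : T / d%:R <= F2 - F1 by rewrite ler_pdivrMr // mulrC.
  have := stiff_le0 _ _ _ obtuse i_neq_j; move: (stiff x i j) => c c_le0.
  have -> : - ((d%:R)^-1 * (c * T)) = (- c) * (T / d%:R) by ring.
  have -> : c * (F1 - F2) = (- c) * (F2 - F1) by ring.
  by apply: ler_wpM2l; rewrite oppr_ge0.
have trlnBinvE i : trlnBinv i = - trlnB i.
  rewrite /trlnBinv /trlnB !tr_mxfun // -sumrN; apply: eq_bigr => k _.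
  by rewrite lnV // posrE beta_gt0.
rewrite !L2K_grad_norm2E; congr (_ * (_ * _)).
by apply: eq_bigr => i _; apply: eq_bigr => j _; rewrite !trlnBinvE -opprD sqrrN.
Qed.
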